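(* A function $r:(0,\infty)\to(0,\infty)$ is of the form $r=r[g]$ for some complete Bernstein function $g$ if and only if $t\mapsto t\,r(t)$ is a Bernstein function.
   Context: A Bernstein function is $h\in C^\infty(0,\infty)$ with $h\ge0$ and $(-1)^nh^{(n)}\le0$ for $n\ge1$; equivalently $h(z)=a+bz+\int_{(0,\infty)}(1-e^{-sz})\mu(\mathrm ds)$ with $a,b\ge0$, $\mu$ positive Radon on $(0,\infty)$, $\int\frac{s}{1+s}\mu(\mathrm ds)<\infty$ (written $h\sim(a,b,\mu)$). It is a complete Bernstein function if $\mu$ has a completely monotone density with respect to Lebesgue measure (completely monotone: $C^\infty$ with $(-1)^nm^{(n)}\ge0$ for all $n\ge0$). For $g\sim(a,b,\mu)$, the rate function is $r[g](t):=\frac a2+\frac bt+\int_{(0,\infty)}\min(s/t,1)\mu(\mathrm ds)$, $t>0$. *)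

From Stdlib Require Import Reals Lra.
Open Scope R_scope.

(* [smooth_on_pos h D]: D is a sequence of successive derivatives of h on
   (0,oo): D 0 = h on (0,oo) and D (n+1) is the derivative of D n there.
   Existence of such D is exactly h in C^oo(0,oo). *)
Definition smooth_on_pos (h : R -> R) (D : nat -> R -> R) : Prop :=
  (forall x, 0 < x -> D 0%nat x = h x) /\
  (forall n x, 0 < x -> derivable_pt_lim (D n) x (D (S n) x)).

Definition bernstein (h : R -> R) : Prop :=
  exists D : nat -> R -> R, smooth_on_pos h D /\
    (forall x, 0 < x -> 0 <= h x) /\
    (forall n x, (1 <= n)%nat -> 0 < x -> (-1) ^ n * D n x <= 0).

Definition completely_monotone (m : R -> R) : Prop :=
  exists D : nat -> R -> R, smooth_on_pos m D /\
    (forall n x, 0 < x -> 0 <= (-1) ^ n * D n x).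

Definition improper_int_pos (f : R -> R) (l : R) : Prop :=
  forall eps, 0 < eps -> exists delta M, 0 < delta /\
    forall a b, 0 < a -> a < delta -> M < b ->
      exists pr : Riemann_integrable f a b, Rabs (RiemannInt pr - l) < eps.

(* A complete Bernstein function g ~ (a, b, mu) with mu(ds) = m(s) ds,
   m completely monotone, int s/(1+s) mu(ds) < oo. *)
Definition cbf_triple (a b : R) (m : R -> R) : Prop :=
  0 <= a /\ 0 <= b /\ completely_monotone m /\
  exists l, improper_int_pos (fun s => s / (1 + s) * m s) l.

Definition rate_of_triple (a b : R) (m : R -> R) (t : R) (v : R) : Prop :=
  exists I, improper_int_pos (fun s => Rmin (s / t) 1 * m s) I /\
    v = a / 2 + b / t + I.

(* Let g ~ (a, b, m(s) ds) and write I_c for the rate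
   integral int_0^oo min(s/c,1) m(s) ds.  Splitting the kernel at s = c gives,
   for every truncation 0 < A < c, 1 < B,
     c int_A^B min(s/c,1) m - int_A^B min(s,1) m = G(c) + (c-1) int_1^B m,
   with G(c) = int_1^c s m - c int_1^c m.  Letting A -> 0, B -> oo (first for
   c = 2, which shows that int_1^B m -> K, then for arbitrary c) yields
     t r(t) = b + t a/2 + I_1 + (t-1) K + G(t),
   whose derivatives are a/2 + K - int_1^t m >= a/2 and then -m, -m', ...;
   complete monotonicity of m gives the Bernstein sign pattern.

   For h = t r(t) Bernstein, take b = h(0+), a/2 = h'(+oo)
   and m = -h''.  Integration by parts gives
     t int_A^B min(s/t,1) (-h'') = h(t) - (h(A) - A h'(A)) - t h'(B),
   and the concavity bound 0 <= A h'(A) <= h(A) - h(0+) lets A -> 0, B -> oo,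
   giving exactly r(t) = a/2 + b/t + I_t; the same identity at t = 1 bounds
   the integrals of s/(1+s) m(s), hence by monotone convergence they converge. *)
From Stdlib Require Import Reals Lra Lia Classical.
From Coquelicot Require Import Coquelicot.
Open Scope R_scope.

Definition continuous_pos (f : R -> R) : Prop := forall x, 0 < x -> continuous f x.

Lemma Rmin_pos_le a b z : 0 < a -> 0 < b -> Rmin a b <= z -> 0 < z.
Proof. intros Ha Hb Hz. unfold Rmin in Hz. destruct (Rle_dec a b); lra. Qed.

Lemma ex_RInt_pos f a b : continuous_pos f -> 0 < a -> 0 < b -> ex_RInt f a b.
Proof.
  intros Hf Ha Hb. apply (@ex_RInt_continuous R_CompleteNormedModule).
  intros z [Hz _]. apply Hf. exact (Rmin_pos_le a b z Ha Hb Hz).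
Qed.

Lemma continuous_pos_mult f g :
  continuous_pos f -> continuous_pos g -> continuous_pos (fun x => f x * g x).
Proof. intros Hf Hg x Hx. apply (continuous_mult f g); auto. Qed.

Lemma continuous_pos_of_derive f df :
  (forall x, 0 < x -> is_derive f x (df x)) -> continuous_pos f.
Proof.
  intros Hd x Hx. apply (@ex_derive_continuous R_AbsRing R_NormedModule).
  exists (df x). auto.
Qed.

Lemma smooth_derive h D n x :
  smooth_on_pos h D -> 0 < x -> is_derive (D n) x (D (S n) x).
Proof. intros [_ HD] Hx. apply is_derive_Reals. auto. Qed.

Lemma smooth_continuous h D n : smooth_on_pos h D -> continuous_pos (D n).
Proof. intros HS. apply (continuous_pos_of_derive _ (D (S n))). intros; eapply smooth_derive; eauto. Qed.

Lemma smooth_continuous_fun h D : smooth_on_pos h D -> continuous_pos h.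
Proof.
  intros HS x Hx. apply continuous_ext_loc with (D 0%nat).
  - apply (filter_imp (fun y => 0 < y)); [intros y Hy; apply HS; auto | exact (open_gt 0 x Hx)].
  - apply (smooth_continuous h D 0 HS); auto.
Qed.

Lemma RInt_of_derive f df a b :
  (forall x, 0 < x -> is_derive f x (df x)) -> continuous_pos df -> 0 < a -> 0 < b ->
  RInt df a b = f b - f a.
Proof.
  intros Hd Hc Ha Hb. apply is_RInt_unique, (@is_RInt_derive R_CompleteNormedModule).
  - intros z [Hz _]. apply Hd. exact (Rmin_pos_le a b z Ha Hb Hz).
  - intros z [Hz _]. apply Hc. exact (Rmin_pos_le a b z Ha Hb Hz).
Qed.

Lemma nondecreasing_of_derive f df x y :
  (forall z, 0 < z -> is_derive f z (df z)) -> continuous_pos df ->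
  (forall z, 0 < z -> 0 <= df z) -> 0 < x -> x <= y -> f x <= f y.
Proof.
  intros Hd Hc Hp Hx Hxy.
  assert (Hint : 0 <= RInt df x y).
  { apply RInt_ge_0; [lra | apply ex_RInt_pos; auto; lra | intros z Hz; apply Hp; lra]. }
  rewrite (RInt_of_derive f df x y) in Hint by (auto; lra). lra.
Qed.

Lemma is_derive_RInt_from_1 f t :
  continuous_pos f -> 0 < t -> is_derive (fun u => RInt f 1 u) t (f t).
Proof.
  intros Hf Ht. apply (is_derive_RInt f (fun u => RInt f 1 u) 1); [|apply Hf; auto].
  apply (filter_imp (fun u => 0 < u)); [|exact (open_gt 0 t Ht)].
  intros u Hu. apply (@RInt_correct R_CompleteNormedModule), ex_RInt_pos; auto; lra.
Qed.

Lemma continuous_pos_moment m : continuous_pos m -> continuous_pos (fun s => s * m s).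
Proof. intros Hm. apply continuous_pos_mult; auto. intros x _. apply continuous_id. Qed.

Lemma levy_weight_continuous : continuous_pos (fun s => s / (1 + s)).
Proof. intros s Hs. apply (@ex_derive_continuous R_AbsRing R_NormedModule). auto_derive. lra. Qed.

Lemma levy_weight_le_min s : 0 < s -> s / (1 + s) <= Rmin (s / 1) 1.
Proof.
  intros Hs. apply Rmin_glb.
  - apply Rmult_le_compat_l; [lra | apply Rinv_le_contravar; lra].
  - apply Rmult_le_reg_r with (1 + s); [lra|].
    unfold Rdiv. rewrite Rmult_assoc, Rinv_l; lra.
Qed.

Definition lim_ends (F : R -> R -> R) (l : R) : Prop :=
  forall eps, 0 < eps -> exists delta M, 0 < delta /\
    forall A B, 0 < A -> A < delta -> M < B -> Rabs (F A B - l) < eps.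

Lemma improper_lim_ends f l :
  improper_int_pos f l -> lim_ends (fun A B => RInt f A B) l.
Proof.
  intros H eps He. destruct (H eps He) as (delta & M & Hd & HI).
  exists delta, M. split; auto. intros A B HA HAd HB.
  destruct (HI A B HA HAd HB) as [pr Hpr]. rewrite (RInt_Reals f A B pr). exact Hpr.
Qed.

Lemma improper_of_lim_ends f l delta0 M0 :
  0 < delta0 -> (forall A B, 0 < A -> A < delta0 -> M0 < B -> ex_RInt f A B) ->
  lim_ends (fun A B => RInt f A B) l -> improper_int_pos f l.
Proof.
  intros Hd0 Hex H eps He. destruct (H eps He) as (delta & M & Hd & HI).
  exists (Rmin delta delta0), (Rmax M M0). split; [apply Rmin_pos; lra|].
  intros A B HA HAd HB.
  pose proof (Rmin_l delta delta0). pose proof (Rmin_r delta delta0).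
  pose proof (Rmax_l M M0). pose proof (Rmax_r M M0).
  exists (ex_RInt_Reals_0 f A B (Hex A B HA ltac:(lra) ltac:(lra))).
  rewrite <- RInt_Reals. apply HI; lra.
Qed.

Lemma lim_ends_const C : lim_ends (fun _ _ => C) C.
Proof.
  intros eps He. exists 1, 0. split; [lra|]. intros.
  rewrite Rminus_diag, Rabs_R0. exact He.
Qed.

Lemma lim_ends_plus F G l k :
  lim_ends F l -> lim_ends G k -> lim_ends (fun A B => F A B + G A B) (l + k).
Proof.
  intros HF HG eps He.
  destruct (HF (eps / 2) ltac:(lra)) as (d1 & M1 & Hd1 & H1).
  destruct (HG (eps / 2) ltac:(lra)) as (d2 & M2 & Hd2 & H2).
  exists (Rmin d1 d2), (Rmax M1 M2). split; [apply Rmin_pos; lra|].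
  intros A B HA HAd HB.
  pose proof (Rmin_l d1 d2). pose proof (Rmin_r d1 d2).
  pose proof (Rmax_l M1 M2). pose proof (Rmax_r M1 M2).
  specialize (H1 A B HA ltac:(lra) ltac:(lra)). specialize (H2 A B HA ltac:(lra) ltac:(lra)).
  replace (F A B + G A B - (l + k)) with ((F A B - l) + (G A B - k)) by ring.
  eapply Rle_lt_trans; [apply Rabs_triang | lra].
Qed.

Lemma lim_ends_scal F l u : lim_ends F l -> lim_ends (fun A B => u * F A B) (u * l).
Proof.
  intros HF eps He.
  assert (Hu : 0 < Rabs u + 1) by (pose proof (Rabs_pos u); lra).
  destruct (HF (eps / (Rabs u + 1)) ltac:(apply Rdiv_lt_0_compat; lra)) as (d & M & Hd & H).
  exists d, M. split; auto. intros A B HA HAd HB. specialize (H A B HA HAd HB).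
  replace (u * F A B - u * l) with (u * (F A B - l)) by ring. rewrite Rabs_mult.
  apply Rle_lt_trans with ((Rabs u + 1) * Rabs (F A B - l)).
  - pose proof (Rabs_pos (F A B - l)). nra.
  - apply Rmult_lt_reg_r with (/ (Rabs u + 1)); [apply Rinv_0_lt_compat; lra|].
    rewrite Rmult_comm, <- Rmult_assoc, Rinv_l, Rmult_1_l by lra. exact H.
Qed.

Lemma lim_ends_eventually_ext F G l delta0 M0 :
  0 < delta0 -> (forall A B, 0 < A -> A < delta0 -> M0 < B -> F A B = G A B) ->
  lim_ends F l -> lim_ends G l.
Proof.
  intros Hd0 HFG HF eps He. destruct (HF eps He) as (d & M & Hd & H).
  exists (Rmin d delta0), (Rmax M M0). split; [apply Rmin_pos; lra|].
  intros A B HA HAd HB.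
  pose proof (Rmin_l d delta0). pose proof (Rmin_r d delta0).
  pose proof (Rmax_l M M0). pose proof (Rmax_r M M0).
  rewrite <- HFG by lra. apply H; lra.
Qed.

Lemma lim_ends_unique F l k : lim_ends F l -> lim_ends F k -> l = k.
Proof.
  intros Hl Hk. apply Rminus_diag_uniq, Rabs_eq_0, Rle_antisym; [|apply Rabs_pos].
  apply Rle_plus_epsilon. intros eps He. rewrite Rplus_0_l.
  destruct (Hl (eps / 2) ltac:(lra)) as (d1 & M1 & Hd1 & H1).
  destruct (Hk (eps / 2) ltac:(lra)) as (d2 & M2 & Hd2 & H2).
  set (A := Rmin d1 d2 / 2). set (B := Rmax M1 M2 + 1).
  assert (Hmin : 0 < Rmin d1 d2) by (apply Rmin_pos; lra).
  pose proof (Rmin_l d1 d2). pose proof (Rmin_r d1 d2).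
  pose proof (Rmax_l M1 M2). pose proof (Rmax_r M1 M2).
  specialize (H1 A B ltac:(unfold A; lra) ltac:(unfold A; lra) ltac:(unfold B; lra)).
  specialize (H2 A B ltac:(unfold A; lra) ltac:(unfold A; lra) ltac:(unfold B; lra)).
  replace (l - k) with ((F A B - k) - (F A B - l)) by ring.
  eapply Rle_trans; [apply Rabs_triang|]. rewrite Rabs_Ropp. lra.
Qed.

Lemma lim_ends_upper (q : R -> R) l x :
  lim_ends (fun _ B => q B) l -> (forall B, x <= B -> q x <= q B) -> q x <= l.
Proof.
  intros Hq Hmono. apply Rle_plus_epsilon. intros eps He.
  destruct (Hq eps He) as (d & M & Hd & H).
  specialize (H (d / 2) (Rmax M x + 1) ltac:(lra) ltac:(lra) ltac:(pose proof (Rmax_l M x); lra)).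
  specialize (Hmono (Rmax M x + 1) ltac:(pose proof (Rmax_r M x); lra)).
  apply Rabs_def2 in H. lra.
Qed.

Lemma infimum_pos f :
  (forall x, 0 < x -> 0 <= f x) ->
  exists L, 0 <= L /\ (forall x, 0 < x -> L <= f x) /\
    forall eps, 0 < eps -> exists x, 0 < x /\ f x < L + eps.
Proof.
  intros Hf.
  destruct (completeness (fun y => exists x, 0 < x /\ y = - f x)) as [M [HM1 HM2]].
  - exists 0. intros y (x & Hx & ->). specialize (Hf x Hx). lra.
  - exists (- f 1), 1. split; [lra | reflexivity].
  - exists (- M). split; [|split].
    + assert (M <= 0); [|lra]. apply HM2. intros y (x & Hx & ->). specialize (Hf x Hx). lra.
    + intros x Hx. assert (- f x <= M) by (apply HM1; eauto). lra.
    + intros eps He. apply NNPP. intros Hn.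
      assert (M <= M - eps); [|lra]. apply HM2. intros y (x & Hx & ->).
      destruct (Rlt_le_dec (f x) (- M + eps)); [exfalso; eauto | lra].
Qed.

Lemma nondecreasing_limit_at_0 f :
  (forall x, 0 < x -> 0 <= f x) -> (forall x y, 0 < x -> x <= y -> f x <= f y) ->
  exists L, 0 <= L /\ (forall x, 0 < x -> L <= f x) /\
    forall eps, 0 < eps -> exists delta, 0 < delta /\
      forall x, 0 < x -> x < delta -> f x < L + eps.
Proof.
  intros Hf Hmono. destruct (infimum_pos f Hf) as (L & HL & Hlow & Happrox).
  exists L. split; [|split]; auto. intros eps He.
  destruct (Happrox eps He) as (x0 & Hx0 & Hfx0). exists x0. split; auto.
  intros x Hx Hxx0. specialize (Hmono x x0 Hx ltac:(lra)). lra.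
Qed.

Lemma nonincreasing_limit_at_infty f :
  (forall x, 0 < x -> 0 <= f x) -> (forall x y, 0 < x -> x <= y -> f y <= f x) ->
  exists L, 0 <= L /\ (forall x, 0 < x -> L <= f x) /\
    forall eps, 0 < eps -> exists M, 0 < M /\ forall x, M < x -> f x < L + eps.
Proof.
  intros Hf Hmono. destruct (infimum_pos f Hf) as (L & HL & Hlow & Happrox).
  exists L. split; [|split]; auto. intros eps He.
  destruct (Happrox eps He) as (x0 & Hx0 & Hfx0). exists x0. split; auto.
  intros x Hxx0. specialize (Hmono x0 x Hx0 ltac:(lra)). lra.
Qed.

Lemma improper_of_bounded_nonneg f C :
  continuous_pos f -> (forall s, 0 < s -> 0 <= f s) ->
  (forall A B, 0 < A -> A < 1 -> 1 < B -> RInt f A B <= C) ->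
  exists l, improper_int_pos f l.
Proof.
  intros Hf Hpos Hbd.
  set (P := fun y => exists A B, 0 < A < 1 /\ 1 < B /\ y = RInt f A B).
  destruct (completeness P) as [l [Hub Hlub]].
  { exists C. intros y (A & B & HA & HB & ->). apply Hbd; lra. }
  { exists (RInt f (1/2) 2), (1/2), 2. repeat split; lra. }
  exists l. apply (improper_of_lim_ends _ _ 1 0 ltac:(lra)); [intros; apply ex_RInt_pos; auto; lra|].
  intros eps He.
  assert (exists A0 B0, 0 < A0 < 1 /\ 1 < B0 /\ l - eps < RInt f A0 B0)
    as (A0 & B0 & HA0 & HB0 & Hclose).
  { apply NNPP. intros Hn. assert (l <= l - eps); [|lra]. apply Hlub.
    intros y (A & B & HA & HB & ->).
    destruct (Rlt_le_dec (l - eps) (RInt f A B)); [|lra].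
    exfalso. apply Hn. exists A, B. auto. }
  exists A0, B0. split; [lra|]. intros A B HA HAA0 HBB0.
  assert (Hex : forall u v, 0 < u -> 0 < v -> ex_RInt f u v) by (intros; apply ex_RInt_pos; auto).
  assert (RInt f A B <= l) by (apply Hub; exists A, B; repeat split; lra).
  assert (RInt f A0 B0 <= RInt f A B).
  { rewrite <- (RInt_Chasles f A A0 B), <- (RInt_Chasles f A0 B0 B) by (apply Hex; lra).
    assert (0 <= RInt f A A0) by (apply RInt_ge_0; [lra | apply Hex; lra | intros; apply Hpos; lra]).
    assert (0 <= RInt f B0 B) by (apply RInt_ge_0; [lra | apply Hex; lra | intros; apply Hpos; lra]).
    unfold plus; simpl. lra. }
  apply Rabs_def1; lra.
Qed.

Definition rate_kernel (c : R) (m : R -> R) (s : R) : R := Rmin (s / c) 1 * m s.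

Lemma rate_kernel_split m c A B :
  continuous_pos m -> 0 < A -> A < c -> c < B ->
  ex_RInt (rate_kernel c m) A B /\
  c * RInt (rate_kernel c m) A B = RInt (fun s => s * m s) A c + c * RInt m c B.
Proof.
  intros Hm HA HAc HcB.
  assert (Hsm := continuous_pos_moment m Hm).
  assert (Elow : forall x, Rmin A c < x < Rmax A c -> /c * (x * m x) = rate_kernel c m x).
  { intros x Hx. rewrite Rmin_left, Rmax_right in Hx by lra. unfold rate_kernel.
    rewrite Rmin_left; [unfold Rdiv; ring|].
    apply Rmult_le_reg_r with c; [lra|]. unfold Rdiv. rewrite Rmult_assoc, Rinv_l; lra. }
  assert (Ehigh : forall x, Rmin c B < x < Rmax c B -> m x = rate_kernel c m x).
  { intros x Hx. rewrite Rmin_left, Rmax_right in Hx by lra. unfold rate_kernel.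
    rewrite Rmin_right; [ring|].
    apply Rmult_le_reg_r with c; [lra|]. unfold Rdiv. rewrite Rmult_assoc, Rinv_l; lra. }
  assert (Xlow : ex_RInt (rate_kernel c m) A c).
  { eapply ex_RInt_ext; [exact Elow|].
    apply (@ex_RInt_scal R_CompleteNormedModule), ex_RInt_pos; auto; lra. }
  assert (Xhigh : ex_RInt (rate_kernel c m) c B).
  { eapply ex_RInt_ext; [exact Ehigh | apply ex_RInt_pos; auto; lra]. }
  split; [exact (ex_RInt_Chasles _ A c B Xlow Xhigh)|].
  rewrite <- (RInt_Chasles _ A c B Xlow Xhigh), <- (RInt_ext _ _ _ _ Elow), <- (RInt_ext _ _ _ _ Ehigh).
  rewrite (RInt_scal (fun s => s * m s)) by (apply ex_RInt_pos; auto; lra).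
  unfold plus, scal; simpl. unfold mult; simpl. field. lra.
Qed.

Definition kernel_defect (m : R -> R) (c : R) : R :=
  RInt (fun s => s * m s) 1 c - c * RInt m 1 c.

Lemma kernel_defect_derive m t :
  continuous_pos m -> 0 < t -> is_derive (kernel_defect m) t (- RInt m 1 t).
Proof.
  intros Hm Ht.
  assert (Hsm := continuous_pos_moment m Hm).
  assert (Hd := @is_derive_minus R_AbsRing R_NormedModule _ _ t _ _
    (is_derive_RInt_from_1 _ t Hsm Ht)
    (@is_derive_mult R_AbsRing _ _ t _ _ (@is_derive_id R_AbsRing t)
       (is_derive_RInt_from_1 m t Hm Ht) Rmult_comm)).
  unfold kernel_defect.
  replace (- RInt m 1 t) with (minus (t * m t) (plus (mult one (RInt m 1 t)) (mult t (m t)))); [exact Hd|].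
  unfold minus, plus, mult, opp, one; simpl. ring.
Qed.

Lemma rate_kernel_difference m c A B :
  continuous_pos m -> 0 < A -> A < c -> A < 1 -> c < B -> 1 < B ->
  c * RInt (rate_kernel c m) A B - RInt (rate_kernel 1 m) A B
  = kernel_defect m c + (c - 1) * RInt m 1 B.
Proof.
  intros Hm HA HAc HA1 HcB H1B.
  assert (Hsm := continuous_pos_moment m Hm).
  destruct (rate_kernel_split m c A B Hm HA HAc HcB) as [_ Ec].
  destruct (rate_kernel_split m 1 A B Hm HA HA1 H1B) as [_ E1].
  rewrite <- (RInt_Chasles (fun s => s * m s) A 1 c) in Ec by (apply ex_RInt_pos; auto; lra).
  rewrite <- (RInt_Chasles m 1 c B) in E1 |- * by (apply ex_RInt_pos; auto; lra).
  rewrite Rmult_1_l in E1. rewrite Ec, E1.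
  unfold kernel_defect, plus; simpl. ring.
Qed.

Lemma tail_mass_limit m I1 I2 :
  continuous_pos m -> improper_int_pos (rate_kernel 1 m) I1 ->
  improper_int_pos (rate_kernel 2 m) I2 ->
  lim_ends (fun _ B => RInt m 1 B) (2 * I2 - I1 - kernel_defect m 2).
Proof.
  intros Hm H1 H2.
  assert (Hlim := lim_ends_plus _ _ _ _
    (lim_ends_plus _ _ _ _ (lim_ends_scal _ _ 2 (improper_lim_ends _ _ H2))
                           (lim_ends_scal _ _ (-1) (improper_lim_ends _ _ H1)))
    (lim_ends_const (- kernel_defect m 2))).
  replace (2 * I2 - I1 - kernel_defect m 2)
    with (2 * I2 + -1 * I1 + - kernel_defect m 2) by ring.
  refine (lim_ends_eventually_ext _ _ _ 1 2 _ _ Hlim); [lra|].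
  intros A B HA HA1 HB.
  assert (E := rate_kernel_difference m 2 A B Hm HA ltac:(lra) HA1 ltac:(lra) ltac:(lra)).
  lra.
Qed.

Lemma rate_integral_formula m I1 K c Ic :
  continuous_pos m -> 0 < c -> improper_int_pos (rate_kernel 1 m) I1 ->
  lim_ends (fun _ B => RInt m 1 B) K -> improper_int_pos (rate_kernel c m) Ic ->
  c * Ic = I1 + kernel_defect m c + (c - 1) * K.
Proof.
  intros Hm Hc H1 HK Hcint.
  assert (Hdirect := lim_ends_plus _ _ _ _
    (lim_ends_scal _ _ c (improper_lim_ends _ _ Hcint))
    (lim_ends_scal _ _ (-1) (improper_lim_ends _ _ H1))).
  assert (Htail := lim_ends_plus _ _ _ _ (lim_ends_const (kernel_defect m c))
                                        (lim_ends_scal _ _ (c - 1) HK)).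
  assert (Hmin : 0 < Rmin c 1) by (apply Rmin_pos; lra).
  apply (lim_ends_eventually_ext _
    (fun A B => c * RInt (rate_kernel c m) A B + -1 * RInt (rate_kernel 1 m) A B)
    _ (Rmin c 1) (Rmax c 1) Hmin) in Htail.
  - assert (E := lim_ends_unique _ _ _ Hdirect Htail). lra.
  - intros A B HA HAm HBM.
    pose proof (Rmin_l c 1). pose proof (Rmin_r c 1).
    pose proof (Rmax_l c 1). pose proof (Rmax_r c 1).
    assert (E := rate_kernel_difference m c A B Hm HA ltac:(lra) ltac:(lra) ltac:(lra) ltac:(lra)).
    lra.
Qed.

Lemma RInt_from_1_nondecreasing m x y :
  continuous_pos m -> (forall s, 0 < s -> 0 <= m s) -> 0 < x -> x <= y ->
  RInt m 1 x <= RInt m 1 y.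
Proof.
  intros Hm Hpos Hx Hxy.
  apply (nondecreasing_of_derive (fun u => RInt m 1 u) m); auto.
  intros z Hz. apply is_derive_RInt_from_1; auto.
Qed.

Definition rate_derivatives (a b I1 K : R) (m : R -> R) (Dm : nat -> R -> R)
  : nat -> R -> R :=
  fun n => match n with
  | O => fun t => (b + t * (a / 2) + I1 + (t - 1) * K) + kernel_defect m t
  | 1%nat => fun t => a / 2 + K - RInt m 1 t
  | S (S k) => fun t => - Dm k t
  end.

Lemma bernstein_of_rate r :
  (forall t, 0 < t -> 0 < r t) ->
  (exists (a b : R) (m : R -> R), cbf_triple a b m /\
     forall t, 0 < t -> rate_of_triple a b m t (r t)) ->
  bernstein (fun t => t * r t).
Proof.
  intros hr (a & b & m & (Ha & Hb & (Dm & HSm & Hcm) & _) & Hrate).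
  assert (Hm : continuous_pos m) by exact (smooth_continuous_fun m Dm HSm).
  assert (Hmpos : forall s, 0 < s -> 0 <= m s).
  { intros s Hs. rewrite <- (proj1 HSm s Hs). specialize (Hcm 0%nat s Hs). simpl in Hcm. lra. }
  destruct (Hrate 1 ltac:(lra)) as (I1 & Hi1 & _).
  destruct (Hrate 2 ltac:(lra)) as (I2 & Hi2 & _).
  set (K := 2 * I2 - I1 - kernel_defect m 2).
  assert (HK : lim_ends (fun _ B => RInt m 1 B) K) by exact (tail_mass_limit m I1 I2 Hm Hi1 Hi2).
  set (D := rate_derivatives a b I1 K m Dm).
  assert (Hformula : forall t, 0 < t -> t * r t = D 0%nat t).
  { intros t Ht. destruct (Hrate t Ht) as (It & Hit & ->).
    assert (E := rate_integral_formula m I1 K t It Hm Ht Hi1 HK Hit).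
    simpl. field_simplify; [|lra]. lra. }
  assert (Htail : forall x, 0 < x -> RInt m 1 x <= K).
  { intros x Hx. apply (lim_ends_upper (fun B => RInt m 1 B)); auto.
    intros B HB. apply RInt_from_1_nondecreasing; auto. }
  exists D. split; [split|split].
  - intros x Hx. symmetry. auto.
  - intros n x Hx. destruct n as [|[|n]]; apply is_derive_Reals; simpl.
    + assert (Haff : is_derive (fun t => b + t * (a / 2) + I1 + (t - 1) * K) x (a / 2 + K))
        by (auto_derive; [auto | ring]).
      assert (Hd := @is_derive_plus R_AbsRing R_NormedModule _ _ x _ _ Haff
                       (kernel_defect_derive m x Hm Hx)).
      unfold plus in Hd; simpl in Hd. replace (a / 2 + K - RInt m 1 x) with (a / 2 + K + - RInt m 1 x) by ring.
      exact Hd.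
    + assert (Hd := @is_derive_minus R_AbsRing R_NormedModule _ _ x _ _
                      (@is_derive_const R_AbsRing R_NormedModule (a / 2 + K) x)
                      (is_derive_RInt_from_1 m x Hm Hx)).
      rewrite (proj1 HSm x Hx). unfold minus, plus, opp, zero in Hd; simpl in Hd.
      replace (- m x) with (0 + - m x) by ring. exact Hd.
    + apply is_derive_Reals, derivable_pt_lim_opp, HSm; auto.
  - intros x Hx. specialize (hr x Hx). nra.
  - intros n x Hn Hx. destruct n as [|[|n]]; [lia | |]; simpl.
    + specialize (Htail x Hx). lra.
    + specialize (Hcm n x Hx). nra.
Qed.

Section BernsteinToRate.

Variables (h : R -> R) (D : nat -> R -> R).
Hypothesis h_smooth : smooth_on_pos h D.
Hypothesis h_nonneg : forall x, 0 < x -> 0 <= h x.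
Hypothesis h_signs : forall n x, (1 <= n)%nat -> 0 < x -> (-1) ^ n * D n x <= 0.

Lemma D0_nonneg x : 0 < x -> 0 <= D 0%nat x.
Proof. intros Hx. rewrite (proj1 h_smooth x Hx). auto. Qed.

Lemma D1_nonneg x : 0 < x -> 0 <= D 1%nat x.
Proof. intros Hx. specialize (h_signs 1%nat x (le_n _) Hx). simpl in h_signs. lra. Qed.

Lemma D2_nonpos x : 0 < x -> D 2%nat x <= 0.
Proof. intros Hx. specialize (h_signs 2%nat x ltac:(lia) Hx). simpl in h_signs. lra. Qed.

Lemma D0_nondecreasing x y : 0 < x -> x <= y -> D 0%nat x <= D 0%nat y.
Proof.
  apply (nondecreasing_of_derive (D 0%nat) (D 1%nat)).
  - intros; apply (smooth_derive h); auto.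
  - exact (smooth_continuous h D 1 h_smooth).
  - exact D1_nonneg.
Qed.

Lemma D1_nonincreasing x y : 0 < x -> x <= y -> D 1%nat y <= D 1%nat x.
Proof.
  intros Hx Hxy.
  enough (- D 1%nat x <= - D 1%nat y) by lra.
  apply (nondecreasing_of_derive (fun z => - D 1%nat z) (fun z => - D 2%nat z)); auto.
  - intros z Hz. apply (@is_derive_opp R_AbsRing R_NormedModule), (smooth_derive h); auto.
  - intros z Hz. apply (@continuous_opp R_UniformSpace R_AbsRing R_NormedModule).
    apply (smooth_continuous h D 2 h_smooth); auto.
  - intros z Hz. pose proof (D2_nonpos z Hz). lra.
Qed.

(* Concavity bound: for any lower bound b0 of h, A h'(A) <= h(A) - b0. *)
Lemma slope_bound b0 A :
  (forall x, 0 < x -> b0 <= D 0%nat x) -> 0 < A -> A * D 1%nat A <= D 0%nat A - b0.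
Proof.
  intros Hb0 HA.
  assert (Hchord : forall d, 0 < d < A -> (A - d) * D 1%nat A <= D 0%nat A - b0).
  { intros d Hd.
    assert (Hint : RInt (fun _ => D 1%nat A) d A <= RInt (D 1%nat) d A).
    { apply RInt_le; [lra | apply (@ex_RInt_const R_CompleteNormedModule)
                     | apply ex_RInt_pos; [apply (smooth_continuous h D 1 h_smooth) | lra | lra]
                     | intros z Hz; apply D1_nonincreasing; lra]. }
    rewrite RInt_const, (RInt_of_derive (D 0%nat) (D 1%nat)) in Hint;
      [| intros; apply (smooth_derive h); auto | exact (smooth_continuous h D 1 h_smooth) | lra | lra].
    unfold scal in Hint; simpl in Hint; unfold mult in Hint; simpl in Hint.
    specialize (Hb0 d ltac:(lra)). lra. }
  apply Rle_plus_epsilon. intros eps He.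
  pose proof (D1_nonneg A HA) as HD1.
  set (d := Rmin (A / 2) (eps / (D 1%nat A + 1))).
  assert (Hd : 0 < d) by (apply Rmin_pos; [lra | apply Rdiv_lt_0_compat; lra]).
  assert (HdA : d <= A / 2) by apply Rmin_l.
  assert (Hdeps : d * D 1%nat A <= eps).
  { apply Rle_trans with (eps / (D 1%nat A + 1) * (D 1%nat A + 1)).
    - apply Rle_trans with (d * (D 1%nat A + 1)); [nra|].
      apply Rmult_le_compat_r; [lra | apply Rmin_r].
    - right. field. lra. }
  specialize (Hchord d ltac:(lra)). lra.
Qed.

Definition levy_density (s : R) : R := - D 2%nat s.

Lemma levy_density_nonneg s : 0 < s -> 0 <= levy_density s.
Proof. intros Hs. unfold levy_density. pose proof (D2_nonpos s Hs). lra. Qed.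

Lemma levy_density_continuous : continuous_pos levy_density.
Proof.
  intros x Hx. apply (@continuous_opp R_UniformSpace R_AbsRing R_NormedModule).
  apply (smooth_continuous h D 2 h_smooth); auto.
Qed.

(* Integrating by parts:
   t int_A^B min(s/t,1) (-h''(s)) ds = h(t) - (h(A) - A h'(A)) - t h'(B). *)
Lemma rate_kernel_closed_form t A B :
  0 < A -> A < t -> t < B ->
  ex_RInt (rate_kernel t levy_density) A B /\
  t * RInt (rate_kernel t levy_density) A B
  = D 0%nat t - (D 0%nat A - A * D 1%nat A) - t * D 1%nat B.
Proof.
  intros HA HAt HtB.
  destruct (rate_kernel_split levy_density t A B levy_density_continuous HA HAt HtB) as [Hex ->].
  split; [exact Hex|].
  rewrite (RInt_of_derive (fun s => D 0%nat s - s * D 1%nat s)), (RInt_of_derive (fun s => - D 1%nat s));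
    [ring | | | lra | lra | | | lra | lra].
  - intros x Hx. apply (@is_derive_opp R_AbsRing R_NormedModule), (smooth_derive h); auto.
  - exact levy_density_continuous.
  - intros x Hx. unfold levy_density.
    assert (Hd := @is_derive_minus R_AbsRing R_NormedModule _ _ x _ _
      (smooth_derive h D 0 x h_smooth Hx)
      (@is_derive_mult R_AbsRing _ _ x _ _ (@is_derive_id R_AbsRing x)
         (smooth_derive h D 1 x h_smooth Hx) Rmult_comm)).
    replace (x * - D 2%nat x) with
      (minus (D 1%nat x) (plus (mult one (D 1%nat x)) (mult x (D 2%nat x)))); [exact Hd|].
    unfold minus, plus, mult, opp, one; simpl. ring.
  - exact (continuous_pos_moment _ levy_density_continuous).
Qed.

Lemma levy_density_integrable :
  exists l, improper_int_pos (fun s => s / (1 + s) * levy_density s) l.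
Proof.
  apply (improper_of_bounded_nonneg _ (D 0%nat 1)).
  - apply continuous_pos_mult; [exact levy_weight_continuous | exact levy_density_continuous].
  - intros s Hs. apply Rmult_le_pos; [apply Rlt_le, Rdiv_lt_0_compat; lra | apply levy_density_nonneg; auto].
  - intros A B HA HA1 HB1.
    destruct (rate_kernel_closed_form 1 A B HA HA1 HB1) as [Hex E].
    apply Rle_trans with (RInt (rate_kernel 1 levy_density) A B).
    + apply RInt_le; [lra | | exact Hex |].
      * apply ex_RInt_pos; [|lra|lra].
        apply continuous_pos_mult; [exact levy_weight_continuous | exact levy_density_continuous].
      * intros s Hs. unfold rate_kernel.
        apply Rmult_le_compat_r; [apply levy_density_nonneg | apply levy_weight_le_min]; lra.
    + rewrite Rmult_1_l in E. rewrite E.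
      pose proof (slope_bound 0 A D0_nonneg HA). pose proof (D1_nonneg B ltac:(lra)). lra.
Qed.

Lemma rate_kernel_limit b0 L1 t :
  (forall x, 0 < x -> b0 <= D 0%nat x) ->
  (forall eps, 0 < eps -> exists delta, 0 < delta /\
     forall x, 0 < x -> x < delta -> D 0%nat x < b0 + eps) ->
  (forall x, 0 < x -> L1 <= D 1%nat x) ->
  (forall eps, 0 < eps -> exists M, 0 < M /\ forall x, M < x -> D 1%nat x < L1 + eps) ->
  0 < t ->
  improper_int_pos (rate_kernel t levy_density) ((D 0%nat t - b0) / t - L1).
Proof.
  intros Hb0 Hb0lim HL1 HL1lim Ht.
  apply (improper_of_lim_ends _ _ t t Ht);
    [intros A B HA HAt HtB; apply rate_kernel_closed_form; lra|].
  intros eps He.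
  destruct (Hb0lim (eps * t / 2) ltac:(nra)) as (delta & Hd & Hnear0).
  destruct (HL1lim (eps / 2) ltac:(lra)) as (M & HM & Hnearoo).
  exists (Rmin delta t), (Rmax M t). split; [apply Rmin_pos; lra|].
  intros A B HA HAd HB.
  pose proof (Rmin_l delta t). pose proof (Rmin_r delta t).
  pose proof (Rmax_l M t). pose proof (Rmax_r M t).
  destruct (rate_kernel_closed_form t A B HA ltac:(lra) ltac:(lra)) as [_ E].
  pose proof (slope_bound b0 A Hb0 HA).
  pose proof (Rmult_le_pos _ _ (Rlt_le _ _ HA) (D1_nonneg A HA)).
  specialize (Hnear0 A HA ltac:(lra)). specialize (Hnearoo B ltac:(lra)).
  specialize (HL1 B ltac:(lra)).
  set (P := RInt (rate_kernel t levy_density) A B) in *.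
  assert (Hscaled : Rabs (t * P - t * ((D 0%nat t - b0) / t - L1)) < t * eps).
  { replace (t * ((D 0%nat t - b0) / t - L1)) with (D 0%nat t - b0 - t * L1) by (field; lra).
    apply Rabs_def1; nra. }
  rewrite <- Rmult_minus_distr_l, Rabs_mult, Rabs_pos_eq in Hscaled by lra.
  apply Rmult_lt_reg_l with t; auto.
Qed.

End BernsteinToRate.

Lemma rate_of_bernstein r :
  bernstein (fun t => t * r t) ->
  exists (a b : R) (m : R -> R), cbf_triple a b m /\
    forall t, 0 < t -> rate_of_triple a b m t (r t).
Proof.
  intros (D & HS & Hpos & Hsign).
  set (h := fun t => t * r t) in *.
  destruct (nondecreasing_limit_at_0 (D 0%nat) (D0_nonneg h D HS Hpos)
              (D0_nondecreasing h D HS Hsign)) as (b0 & Hb0 & Hb0low & Hb0lim).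
  destruct (nonincreasing_limit_at_infty (D 1%nat) (D1_nonneg D Hsign)
              (D1_nonincreasing h D HS Hsign)) as (L1 & HL1 & HL1low & HL1lim).
  exists (2 * L1), b0, (levy_density D). split; [split; [|split; [|split]]|].
  - lra.
  - exact Hb0.
  - exists (fun n s => - D (S (S n)) s). split; [split|].
    + intros x Hx. reflexivity.
    + intros n x Hx. apply derivable_pt_lim_opp, HS; auto.
    + intros n x Hx. specialize (Hsign (S (S n)) x ltac:(lia) Hx).
      replace ((-1) ^ S (S n)) with ((-1) ^ n) in Hsign by (simpl; ring). lra.
  - exact (levy_density_integrable h D HS Hpos Hsign).
  - intros t Ht. exists ((D 0%nat t - b0) / t - L1). split.
    + exact (rate_kernel_limit h D HS Hsign b0 L1 t Hb0low Hb0lim HL1low HL1lim Ht).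
    + rewrite (proj1 HS t Ht). unfold h. field. lra.
Qed.

Theorem theoremB2 (r : R -> R) (hr : forall t, 0 < t -> 0 < r t) :
  (exists (a b : R) (m : R -> R), cbf_triple a b m /\
     forall t, 0 < t -> rate_of_triple a b m t (r t))
  <-> bernstein (fun t => t * r t).
Proof.
  split.
  - exact (bernstein_of_rate r hr).
  - exact (rate_of_bernstein r).
Qed.
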